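(* Let $H$ be a fixed infinite-dimensional separable Hilbert space and let $J$ be a homogeneous two-sided ideal in $\mathbb{C}\langle x_1,\dots,x_d\rangle$, $d<\infty$. Then $I(Z(J))=J$. In particular $Z(J)=\{(0,\dots,0)\}$ if and only if $J$ is the ideal generated by $x_1,\dots,x_d$.
   Context: $\mathbb{C}\langle x_1,\dots,x_d\rangle$ is the algebra of polynomials in noncommuting variables; a homogeneous ideal is a two-sided ideal generated by homogeneous polynomials. For $p=\sum_\alpha c_\alpha x^\alpha$ and $\underline T=(T_1,\dots,T_d)\in B(H)^d$, $p(\underline T)=\sum_\alpha c_\alpha T^\alpha$ with $T^{\alpha_1\cdots\alpha_k}=T_{\alpha_1}\cdots T_{\alpha_k}$ and $T^{\emptyset}=I_H$. $Z(J)=\{\underline T\in B(H)^d: p(\underline T)=0\ \forall p\in J\}$ and, for $Z\subseteq B(H)^d$, $I(Z)=\{p: p(\underline T)=0\ \forall\underline T\in Z\}$. *)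

From Stdlib Require Import Reals List Lra.
Import ListNotations.
Open Scope R_scope.

Record C := mkC { Re : R; Im : R }.
Definition C0 : C := mkC 0 0.
Definition C1 : C := mkC 1 0.
Definition Cadd (z w : C) : C := mkC (Re z + Re w) (Im z + Im w).
Definition Cmul (z w : C) : C :=
  mkC (Re z * Re w - Im z * Im w) (Re z * Im w + Im z * Re w).
Definition Cnorm2 (z : C) : R := Re z * Re z + Im z * Im z.

(** The Hilbert space H = l^2(N; C) (the infinite-dimensional separable one). *)
Definition vec := nat -> C.
Definition vadd (f g : vec) : vec := fun n => Cadd (f n) (g n).
Definition vscal (c : C) (f : vec) : vec := fun n => Cmul c (f n).
Definition vzero : vec := fun _ => C0.
Definition sqsum (f : vec) (l : R) : Prop := infinite_sum (fun n => Cnorm2 (f n)) l.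
Definition in_l2 (f : vec) : Prop := exists l, sqsum f l.

(** Operators; only their action on H matters. *)
Definition op := vec -> vec.
(* T is (the restriction to H of) an element of B(H): linear on H, maps H
   into H, and ||T f||^2 <= M ||f||^2. *)
Definition bounded_op (T : op) : Prop :=
  (forall f g, in_l2 f -> in_l2 g -> forall n, T (vadd f g) n = vadd (T f) (T g) n) /\
  (forall c f, in_l2 f -> forall n, T (vscal c f) n = vscal c (T f) n) /\
  (exists M, forall f l, sqsum f l -> exists l', sqsum (T f) l' /\ l' <= M * l).

(** Noncommutative polynomials, given as finite lists of terms c * x^w,
    with word w = [i1; ...; ik] standing for x_{i1} ... x_{ik}
    (variables indexed from 0, i.e. x_1..x_d of the paper are 0..d-1). *)
Definition word := list nat.
Definition term := (word * C)%type.
Definition ncpoly := list term.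

Definition is_poly (d : nat) (p : ncpoly) : Prop :=
  Forall (fun t => Forall (fun i => (i < d)%nat) (fst t)) p.

Definition coef (p : ncpoly) (w : word) : C :=
  fold_right (fun t acc => Cadd (if list_eq_dec Nat.eq_dec (fst t) w then snd t else C0) acc)
             C0 p.

Definition is_homog (p : ncpoly) : Prop :=
  exists k, forall w, coef p w <> C0 -> length w = k.

Fixpoint word_act (T : nat -> op) (w : word) (f : vec) : vec :=
  match w with
  | nil => f
  | i :: w' => T i (word_act T w' f)
  end.

Definition peval (T : nat -> op) (p : ncpoly) (f : vec) : vec :=
  fold_right (fun t acc => vadd (vscal (snd t) (word_act T (fst t) f)) acc) vzero p.

Definition pvanish (T : nat -> op) (p : ncpoly) : Prop :=
  forall f, in_l2 f -> forall n, peval T p f n = C0.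

(** Two-sided ideal generated by a set G of polynomials (as a set of
    polynomials, closed under equality of coefficients). *)
Definition mono_mul (a : word) (p : ncpoly) (b : word) : ncpoly :=
  map (fun t => (a ++ fst t ++ b, snd t)) p.
Definition scal_poly (c : C) (p : ncpoly) : ncpoly :=
  map (fun t => (fst t, Cmul c (snd t))) p.

Definition in_ideal (d : nat) (G : ncpoly -> Prop) (p : ncpoly) : Prop :=
  is_poly d p /\
  exists L : list (word * C * ncpoly * word),
    Forall (fun x => match x with (a, c, g, b) =>
               G g /\ Forall (fun i => (i < d)%nat) a /\ Forall (fun i => (i < d)%nat) b end) L /\
    forall w, coef p w =
      coef (flat_map (fun x => match x with (a, c, g, b) => scal_poly c (mono_mul a g b) end) L) w.

(** Zero set and vanishing ideal.  A d-tuple in B(H)^d is represented by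
    T : nat -> op, of which only T 0, ..., T (d-1) are relevant. *)
Definition inZ (d : nat) (J : ncpoly -> Prop) (T : nat -> op) : Prop :=
  (forall i, (i < d)%nat -> bounded_op (T i)) /\ (forall p, J p -> pvanish T p).

Definition inI (d : nat) (Z : (nat -> op) -> Prop) (p : ncpoly) : Prop :=
  is_poly d p /\ forall T, Z T -> pvanish T p.

Definition variables (d : nat) (g : ncpoly) : Prop :=
  exists i, (i < d)%nat /\ g = [([i], C1)].

(* Let p be a polynomial outside J and n its degree.  The algebra
   A = C<x>/(J + span of the words of length > n) is finite-dimensional.  By
   homogeneity, an element of J that agrees with p on the words of length <= n
   can be truncated to degree n inside J, so p is nonzero in A; likewise 1 is
   outside J (else J is everything), so no element of J has a constant term.
   Left multiplication by x_i on A, written in a basis of A and extended by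
   zero to l^2, gives bounded operators T_i.  For g in J and a vector v of A,
   g(T) v is the class of g v, which is 0; while p(T) applied to the class of 1
   is the class of p, which is not.  Hence p is not in I(Z(J)).  For the second
   claim, the zero tuple lies in every Z(J) and I({0}) is the ideal of
   polynomials without constant term, which is (x_1, ..., x_d). *)

From Stdlib Require Import Reals List Lra Lia Psatz.
From Stdlib Require Import Classical ClassicalEpsilon FunctionalExtensionality.
Import ListNotations.

Local Notation is_word d w := (Forall (fun i => (i < d)%nat) w).

Lemma C_ext (z w : C) : Re z = Re w -> Im z = Im w -> z = w.
Proof. destruct z, w; simpl; intros; subst; reflexivity. Qed.

Definition Copp (z : C) : C := mkC (- Re z) (- Im z).
Definition Csub (z w : C) : C := Cadd z (Copp w).
Definition Cinv (z : C) : C := mkC (Re z / Cnorm2 z) (- Im z / Cnorm2 z).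
Definition Cdiv (z w : C) : C := Cmul z (Cinv w).

Lemma Cring_theory : ring_theory C0 C1 Cadd Cmul Csub Copp (@eq C).
Proof.
  constructor; intros; repeat match goal with z : C |- _ => destruct z end;
    apply C_ext; unfold Cadd, Cmul, Copp, Csub, C0, C1; simpl; ring.
Qed.
Add Ring Cring : Cring_theory.

Lemma Cnorm2_eq0 z : Cnorm2 z = 0%R -> z = C0.
Proof.
  destruct z as [a b]; unfold Cnorm2; simpl; intro E.
  assert (a = 0%R) by nra; assert (b = 0%R) by nra; subst; reflexivity.
Qed.

Lemma Cfield_theory : field_theory C0 C1 Cadd Cmul Csub Copp Cdiv Cinv (@eq C).
Proof.
  constructor; [exact Cring_theory | intro E; injection E; lra | reflexivity |].
  intros z Hz. assert (Cnorm2 z <> 0%R) by (intro E; exact (Hz (Cnorm2_eq0 z E))).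
  destruct z as [a b]; unfold Cnorm2 in *; simpl in *.
  apply C_ext; unfold Cmul, Cinv, Cnorm2, C1; simpl; field; auto.
Qed.
Add Field Cfield : Cfield_theory.

(* Coefficients and evaluations at operators are both of the form [psum X p]
   for some [X : word -> C]; most identities are proved at that level. *)
Definition psum (X : word -> C) (p : ncpoly) : C :=
  fold_right (fun t acc => Cadd (Cmul (snd t) (X (fst t))) acc) C0 p.

Definition delta (w : word) (u : word) : C :=
  if list_eq_dec Nat.eq_dec u w then C1 else C0.

Lemma coef_psum p w : coef p w = psum (delta w) p.
Proof.
  induction p as [|[u c] p IH]; simpl; [reflexivity|]. rewrite IH; unfold delta.
  destruct (list_eq_dec Nat.eq_dec u w); simpl; ring.
Qed.

Lemma peval_psum T p f n : peval T p f n = psum (fun w => word_act T w f n) p.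
Proof.
  induction p as [|[u c] p IH]; simpl; [reflexivity|]. unfold vadd, vscal. rewrite IH. reflexivity.
Qed.

Lemma psum_app X p q : psum X (p ++ q) = Cadd (psum X p) (psum X q).
Proof. induction p; simpl; [ring|]. rewrite IHp. ring. Qed.

Lemma psum_scal X c p : psum X (scal_poly c p) = Cmul c (psum X p).
Proof. induction p; simpl; [ring|]. rewrite IHp. ring. Qed.

Lemma psum_mono X a p b : psum X (mono_mul a p b) = psum (fun u => X (a ++ u ++ b)) p.
Proof. induction p; simpl; [ring|]. rewrite IHp. reflexivity. Qed.

Lemma psum_flat_map {A} X (F : A -> ncpoly) L :
  psum X (flat_map F L) = fold_right (fun x acc => Cadd (psum X (F x)) acc) C0 L.
Proof. induction L; simpl; [reflexivity|]. rewrite psum_app, IHL. reflexivity. Qed.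

Lemma psum_fun_add X Y p : psum (fun w => Cadd (X w) (Y w)) p = Cadd (psum X p) (psum Y p).
Proof. induction p; simpl; [ring|]. rewrite IHp. ring. Qed.

Lemma psum_fun_scal X c p : psum (fun w => Cmul c (X w)) p = Cmul c (psum X p).
Proof. induction p; simpl; [ring|]. rewrite IHp. ring. Qed.

Lemma psum_fun0 p : psum (fun _ => C0) p = C0.
Proof. induction p; simpl; [ring|]. rewrite IHp. ring. Qed.

Lemma psum_ext_in X Y p : Forall (fun t => X (fst t) = Y (fst t)) p -> psum X p = psum Y p.
Proof. induction 1; simpl; [ring|]. rewrite IHForall, H. ring. Qed.

Lemma psum_ext X Y p : (forall w, X w = Y w) -> psum X p = psum Y p.
Proof. intro H. apply psum_ext_in, Forall_forall. auto. Qed.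

Lemma psum_swap (Y : word -> word -> C) g h :
  psum (fun w => psum (Y w) h) g = psum (fun v => psum (fun w => Y w v) g) h.
Proof.
  induction g as [|[u c] g IH]; simpl; [symmetry; apply psum_fun0|].
  rewrite IH, <- psum_fun_scal, <- psum_fun_add. reflexivity.
Qed.

Lemma psum_update X X' g u :
  Forall (fun t => fst t <> u -> X (fst t) = X' (fst t)) g ->
  psum X g = Cadd (psum X' g) (Cmul (coef g u) (Csub (X u) (X' u))).
Proof.
  induction 1 as [|[v c] g Hv _ IH]; simpl in *; [ring|]. rewrite IH.
  destruct (list_eq_dec Nat.eq_dec v u) as [->|]; [ring|]. rewrite Hv by auto. ring.
Qed.

Ltac decide_words :=
  repeat match goal with |- context [list_eq_dec ?e ?a ?b] => destruct (list_eq_dec e a b) end;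
  subst; try congruence; ring.

Definition other_word (u : word) (t : term) : bool :=
  if list_eq_dec Nat.eq_dec (fst t) u then false else true.

Lemma other_word_cons u v c :
  other_word u (v, c) = if list_eq_dec Nat.eq_dec v u then false else true.
Proof. reflexivity. Qed.

Lemma psum_split_word X p u :
  psum X p = Cadd (Cmul (coef p u) (X u)) (psum X (filter (other_word u) p)).
Proof.
  induction p as [|[v c] p IH]; simpl; [ring|]. rewrite other_word_cons, IH.
  destruct (list_eq_dec Nat.eq_dec v u) as [->|]; simpl; ring.
Qed.

Lemma coef_filter_other p u w :
  coef (filter (other_word u) p) w = if list_eq_dec Nat.eq_dec w u then C0 else coef p w.
Proof.
  induction p as [|[v c] p IH]; simpl.
  - destruct (list_eq_dec Nat.eq_dec w u); reflexivity.
  - rewrite other_word_cons.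
    destruct (list_eq_dec Nat.eq_dec v u); simpl; rewrite IH; decide_words.
Qed.

Lemma psum_coef0 X p : (forall w, coef p w = C0) -> psum X p = C0.
Proof.
  remember (length p) as k eqn:Hk. revert p Hk.
  induction k as [k IH] using Wf_nat.lt_wf_ind; intros [|[u c] p] Hk H; [reflexivity|].
  rewrite (psum_split_word X _ u), H. simpl. rewrite other_word_cons.
  destruct (list_eq_dec Nat.eq_dec u u) as [_|]; [|congruence].
  rewrite (IH (length (filter (other_word u) p))); [ring | | reflexivity |].
  - pose proof (filter_length_le (other_word u) p). simpl in Hk. lia.
  - intro w. rewrite coef_filter_other.
    destruct (list_eq_dec Nat.eq_dec w u) as [|Hw]; [reflexivity|].
    specialize (H w); simpl in H.
    destruct (list_eq_dec Nat.eq_dec u w); [congruence|]. rewrite <- H. ring.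
Qed.

Lemma psum_coef_ext X p q : (forall w, coef p w = coef q w) -> psum X p = psum X q.
Proof.
  intro H.
  assert (E : psum X (p ++ scal_poly (Copp C1) q) = C0).
  { apply psum_coef0. intro w. rewrite !coef_psum, psum_app, psum_scal, <- !coef_psum, H. ring. }
  rewrite psum_app, psum_scal in E.
  transitivity (Cadd (Cadd (psum X p) (Cmul (Copp C1) (psum X q))) (psum X q)); [ring|].
  rewrite E. ring.
Qed.

Definition psub (p q : ncpoly) : ncpoly := p ++ scal_poly (Copp C1) q.

Lemma psum_psub X p q : psum X (psub p q) = Csub (psum X p) (psum X q).
Proof. unfold psub. rewrite psum_app, psum_scal. ring. Qed.

Lemma coef_app p q w : coef (p ++ q) w = Cadd (coef p w) (coef q w).
Proof. rewrite !coef_psum. apply psum_app. Qed.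

Lemma coef_scal c p w : coef (scal_poly c p) w = Cmul c (coef p w).
Proof. rewrite !coef_psum. apply psum_scal. Qed.

Lemma coef_mono_mul a g b u : coef (mono_mul a g b) (a ++ u ++ b) = coef g u.
Proof.
  rewrite !coef_psum, psum_mono. apply psum_ext. intro w. unfold delta.
  destruct (list_eq_dec Nat.eq_dec (a ++ w ++ b) (a ++ u ++ b)) as [E|E];
    destruct (list_eq_dec Nat.eq_dec w u); subst; try congruence.
  apply app_inv_head, app_inv_tail in E. congruence.
Qed.

Lemma coef_mono_mul_out a g b w :
  (forall u, w <> a ++ u ++ b) -> coef (mono_mul a g b) w = C0.
Proof.
  intro H. rewrite coef_psum, psum_mono, <- (psum_fun0 g). apply psum_ext. intro u.
  unfold delta. destruct (list_eq_dec Nat.eq_dec (a ++ u ++ b) w); [|reflexivity].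
  exfalso; eapply H; eauto.
Qed.

Lemma coef_out (P : word -> Prop) p w :
  Forall (fun t => P (fst t)) p -> ~ P w -> coef p w = C0.
Proof.
  intros H Hw. induction H as [|[v c] p Hv _ IH]; simpl; [reflexivity|]. rewrite IH.
  destruct (list_eq_dec Nat.eq_dec v w); [subst; contradiction | ring].
Qed.

(* The product expanded along the words of [g]; [psum_pmul_swap] expands it
   along the words of [h] instead. *)
Definition pmul (g h : ncpoly) : ncpoly :=
  flat_map (fun t => scal_poly (snd t) (mono_mul (fst t) h [])) g.

Lemma psum_pmul X g h : psum X (pmul g h) = psum (fun w => psum (fun v => X (w ++ v)) h) g.
Proof.
  unfold pmul. induction g as [|[w c] g IH]; simpl; [reflexivity|].
  rewrite psum_app, IH, psum_scal, psum_mono. f_equal. f_equal.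
  apply psum_ext. intro v. rewrite app_nil_r. reflexivity.
Qed.

Lemma psum_pmul_swap X g h :
  psum X (pmul g h) = psum X (flat_map (fun s => scal_poly (snd s) (mono_mul [] g (fst s))) h).
Proof.
  rewrite psum_pmul, psum_swap.
  induction h as [|[v c] h IH]; simpl; [reflexivity|].
  rewrite psum_app, IH, psum_scal, psum_mono. reflexivity.
Qed.

Lemma psum_pmul_one_r X p : psum X (pmul p [([], C1)]) = psum X p.
Proof. rewrite psum_pmul. apply psum_ext. intro w. simpl. rewrite app_nil_r. ring. Qed.

Lemma is_poly_app d p q : is_poly d p -> is_poly d q -> is_poly d (p ++ q).
Proof. intros; apply Forall_app; auto. Qed.

Lemma is_poly_scal d c p : is_poly d p -> is_poly d (scal_poly c p).
Proof. intro H. apply Forall_map. eapply Forall_impl; [|exact H]. auto. Qed.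

Lemma is_poly_mono d a p b :
  is_word d a -> is_word d b -> is_poly d p -> is_poly d (mono_mul a p b).
Proof.
  intros Ha Hb H. apply Forall_map. eapply Forall_impl; [|exact H].
  simpl; intros. rewrite !Forall_app; auto.
Qed.

Lemma is_poly_filter d f p : is_poly d p -> is_poly d (filter f p).
Proof.
  intro H. apply Forall_forall. intros x Hx. apply filter_In in Hx.
  eapply Forall_forall in H; [exact H | tauto].
Qed.

Definition gen_term (x : word * C * ncpoly * word) : ncpoly :=
  let '(a, c, g, b) := x in scal_poly c (mono_mul a g b).

Definition short (m : nat) (t : term) : bool := Nat.leb (length (fst t)) m.

Lemma coef_filter_short m p w :
  coef (filter (short m) p) w = if Nat.leb (length w) m then coef p w else C0.
Proof.
  induction p as [|[v c] p IH]; simpl; [destruct (Nat.leb (length w) m); reflexivity|].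
  unfold short at 1; simpl.
  destruct (Nat.leb (length v) m) eqn:Ev; simpl; rewrite IH;
    destruct (list_eq_dec Nat.eq_dec v w); subst; try rewrite Ev;
    destruct (Nat.leb (length w) m); try ring; congruence.
Qed.

Definition homog_of_deg (g : ncpoly) (k : nat) : Prop :=
  forall w, coef g w <> C0 -> length w = k.

Lemma coef_gen_term_off_deg a c g b k w :
  homog_of_deg g k -> length w <> (length a + k + length b)%nat ->
  coef (gen_term (a, c, g, b)) w = C0.
Proof.
  intros Hg Hw. simpl. rewrite coef_scal.
  destruct (classic (exists u, w = a ++ u ++ b)) as [[u ->]|Hn].
  - rewrite coef_mono_mul. destruct (classic (coef g u = C0)) as [->|Hu]; [ring|].
    exfalso. apply Hw. rewrite !length_app, (Hg u Hu). lia.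
  - rewrite coef_mono_mul_out; [ring|]. intros u Hu. eauto.
Qed.

(* The term [a g b] has degree at most [m]; vacuous when [g = 0], which has every degree. *)
Definition fits (m : nat) (x : word * C * ncpoly * word) : Prop :=
  let '(a, _, g, b) := x in forall k, homog_of_deg g k -> (length a + k + length b <= m)%nat.

Definition fitsb (m : nat) x : bool :=
  if excluded_middle_informative (fits m x) then true else false.

Lemma coef_gen_term_short m x k w :
  homog_of_deg (snd (fst x)) k ->
  (if Nat.leb (length w) m then coef (gen_term x) w else C0) =
  (if fitsb m x then coef (gen_term x) w else C0).
Proof.
  destruct x as [[[a c] g] b]; intro Hk; cbn [fst snd] in Hk. unfold fitsb.
  destruct (excluded_middle_informative (fits m (a, c, g, b))) as [Hf|Hf];
    destruct (Nat.leb_spec (length w) m) as [Hw|Hw]; try reflexivity.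
  - specialize (Hf k Hk). rewrite (coef_gen_term_off_deg _ _ _ _ k); auto. lia.
  - destruct (not_all_ex_not _ _ Hf) as [k' Hk']. apply imply_to_and in Hk' as [Hk' Hlt].
    rewrite (coef_gen_term_off_deg _ _ _ _ k'); auto. lia.
Qed.

Section Ideal.
Variables (d : nat) (G : ncpoly -> Prop).

Lemma in_ideal_coef_ext p q :
  in_ideal d G p -> is_poly d q -> (forall w, coef q w = coef p w) -> in_ideal d G q.
Proof.
  intros [_ [L [HL E]]] Hq H. split; auto. exists L. split; auto. intro w. rewrite H. auto.
Qed.

Lemma in_ideal_psum_ext p q :
  in_ideal d G p -> is_poly d q -> (forall X, psum X q = psum X p) -> in_ideal d G q.
Proof. intros Hp Hq H. apply (in_ideal_coef_ext p); auto. intro w. rewrite !coef_psum. auto. Qed.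

Lemma in_ideal_nil : in_ideal d G [].
Proof. split; [constructor|]. exists []. split; [constructor | reflexivity]. Qed.

Lemma in_ideal_app p q : in_ideal d G p -> in_ideal d G q -> in_ideal d G (p ++ q).
Proof.
  intros [Hp [L1 [H1 E1]]] [Hq [L2 [H2 E2]]]. split; [apply is_poly_app; auto|].
  exists (L1 ++ L2). split; [apply Forall_app; auto|]. intro w.
  change (flat_map _ (L1 ++ L2)) with (flat_map gen_term (L1 ++ L2)).
  rewrite flat_map_app, !coef_app, E1, E2. reflexivity.
Qed.

Lemma in_ideal_flat_map {A} (F : A -> ncpoly) L :
  Forall (fun x => in_ideal d G (F x)) L -> in_ideal d G (flat_map F L).
Proof. induction 1; simpl; [apply in_ideal_nil | apply in_ideal_app; auto]. Qed.

Lemma in_ideal_scal c p : in_ideal d G p -> in_ideal d G (scal_poly c p).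
Proof.
  intros [Hp [L [HL E]]]. split; [apply is_poly_scal; auto|].
  exists (map (fun '(a, c', g, b) => (a, Cmul c c', g, b)) L). split.
  - apply Forall_map. eapply Forall_impl; [|exact HL]. intros [[[a c'] g] b]; auto.
  - intro w. rewrite coef_scal, E, !coef_psum.
    change (flat_map _ ?L) with (flat_map gen_term L). rewrite !psum_flat_map.
    clear HL E. induction L as [|[[[a c'] g] b] L IH]; simpl; [ring|].
    rewrite <- IH, !psum_scal. ring.
Qed.

Lemma in_ideal_mono a p b :
  is_word d a -> is_word d b -> in_ideal d G p -> in_ideal d G (mono_mul a p b).
Proof.
  intros Ha Hb [Hp [L [HL E]]]. split; [apply is_poly_mono; auto|].
  exists (map (fun '(a', c, g, b') => (a ++ a', c, g, b' ++ b)) L). split.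
  - apply Forall_map. eapply Forall_impl; [|exact HL]. intros [[[a' c'] g] b'].
    intros (? & ? & ?). repeat split; auto; apply Forall_app; auto.
  - intro w. rewrite !coef_psum, psum_mono, (psum_coef_ext _ p (flat_map gen_term L)) by exact E.
    change (flat_map _ (map ?f L)) with (flat_map gen_term (map f L)).
    rewrite !psum_flat_map. clear HL E. induction L as [|[[[a' c'] g] b'] L IH]; simpl; [ring|].
    rewrite IH, !psum_scal, !psum_mono. do 2 f_equal. apply psum_ext. intro u.
    rewrite <- !app_assoc. reflexivity.
Qed.

Lemma in_ideal_pmul_r g h : is_poly d g -> in_ideal d G h -> in_ideal d G (pmul g h).
Proof.
  intros Hg Hh. apply in_ideal_flat_map. eapply Forall_impl; [|exact Hg].
  intros t Ht. apply in_ideal_scal, in_ideal_mono; auto.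
Qed.

Lemma in_ideal_of_one p : in_ideal d G [([], C1)] -> is_poly d p -> in_ideal d G p.
Proof.
  intros H1 Hp. apply (in_ideal_psum_ext (pmul p [([], C1)])); auto.
  - apply in_ideal_pmul_r; auto.
  - intro X. symmetry. apply psum_pmul_one_r.
Qed.

Hypothesis homogeneous_generators : forall g, G g -> is_poly d g /\ is_homog g.

(* A generator term [a g b] is homogeneous, so truncating a combination of such
   terms to degree [m] amounts to dropping the terms of degree above [m]. *)
Lemma in_ideal_filter_short m j : in_ideal d G j -> in_ideal d G (filter (short m) j).
Proof.
  intros [Hj [L [HL E]]]. split; [apply is_poly_filter; auto|].
  exists (filter (fitsb m) L). split.
  - apply Forall_forall. intros x Hx. apply filter_In in Hx.
    eapply Forall_forall in HL; [exact HL | tauto].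
  - intro w. rewrite coef_filter_short, E. clear E Hj. symmetry.
    change (flat_map _ ?L) with (flat_map gen_term L).
    induction HL as [|x L Hx HL IH]; [destruct (Nat.leb (length w) m); reflexivity|].
    assert (Gg : G (snd (fst x))) by (destruct x as [[[a c] g] b]; apply Hx).
    destruct (homogeneous_generators _ Gg) as [_ [k Hk]].
    transitivity (Cadd (if fitsb m x then coef (gen_term x) w else C0)
                       (if Nat.leb (length w) m then coef (flat_map gen_term L) w else C0)).
    + rewrite <- IH. cbn [filter]. destruct (fitsb m x); cbn [flat_map]; rewrite ?coef_app; ring.
    + rewrite <- (coef_gen_term_short m x k w Hk). cbn [flat_map].
      destruct (Nat.leb (length w) m); rewrite ?coef_app; ring.
Qed.

Lemma in_ideal_one_of_const g : in_ideal d G g -> coef g [] <> C0 -> in_ideal d G [([], C1)].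
Proof.
  intros Hg Ha. apply (in_ideal_coef_ext (scal_poly (Cinv (coef g [])) (filter (short 0) g))).
  - apply in_ideal_scal, in_ideal_filter_short; auto.
  - repeat constructor.
  - intro w. rewrite coef_scal, coef_filter_short. destruct w; simpl; [field; auto | ring].
Qed.

End Ideal.

Fixpoint words (d k : nat) : list word :=
  match k with
  | 0 => [[]]
  | S k => flat_map (fun i => map (cons i) (words d k)) (seq 0 d)
  end.

Lemma words_spec d k w : In w (words d k) <-> length w = k /\ is_word d w.
Proof.
  revert w. induction k as [|k IH]; intro w; simpl.
  - split; [intros [<-|[]]; auto | intros [H _]; destruct w; [auto | discriminate]].
  - rewrite in_flat_map. split.
    + intros (i & Hi & Hw). apply in_seq in Hi. apply in_map_iff in Hw as (u & <- & Hu).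
      apply IH in Hu as [? ?]. simpl. split; [lia|]. constructor; auto; lia.
    + intros [Hl Hf]. destruct w as [|i u]; [discriminate|]. inversion Hf; subst.
      exists i. split; [apply in_seq; lia|]. apply in_map, IH. simpl in Hl. auto.
Qed.

Definition small_word (d n : nat) (w : word) : Prop := (length w <= n)%nat /\ is_word d w.

Definition small_words (d n : nat) : list word := flat_map (words d) (seq 0 (S n)).

Lemma small_words_spec d n w : In w (small_words d n) <-> small_word d n w.
Proof.
  unfold small_words, small_word. rewrite in_flat_map. split.
  - intros (k & Hk & Hw). apply in_seq in Hk. apply words_spec in Hw as [? ?]. split; auto; lia.
  - intros [Hl Hf]. exists (length w). split; [apply in_seq; lia | apply words_spec; auto].
Qed.

Fixpoint lincomb (B : list word) (c : nat -> C) : ncpoly :=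
  match B with
  | [] => []
  | w :: B' => (w, c 0%nat) :: lincomb B' (fun k => c (S k))
  end.

Lemma psum_lincomb_add X B c1 c2 :
  psum X (lincomb B (fun k => Cadd (c1 k) (c2 k))) =
  Cadd (psum X (lincomb B c1)) (psum X (lincomb B c2)).
Proof. revert c1 c2. induction B; intros; simpl; [ring|]. rewrite IHB. ring. Qed.

Lemma psum_lincomb_scal X B a c :
  psum X (lincomb B (fun k => Cmul a (c k))) = Cmul a (psum X (lincomb B c)).
Proof. revert c. induction B; intros; simpl; [ring|]. rewrite IHB. ring. Qed.

Lemma psum_lincomb0 X B : psum X (lincomb B (fun _ => C0)) = C0.
Proof. induction B; simpl; [reflexivity|]. rewrite IHB. ring. Qed.

Lemma lincomb_ext B c c' :
  (forall k, (k < length B)%nat -> c k = c' k) -> lincomb B c = lincomb B c'.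
Proof.
  revert c c'. induction B; intros c c' H; simpl; [reflexivity|].
  rewrite H by (simpl; lia). f_equal. apply IHB. intros k Hk. apply H. simpl; lia.
Qed.

Lemma lincomb_words B c : Forall (fun t => In (fst t) B) (lincomb B c).
Proof.
  revert c. induction B; intro c; simpl; constructor; simpl; auto.
  eapply Forall_impl; [|apply IHB]. simpl; auto.
Qed.

Definition supported (N : nat) (c : nat -> C) : Prop := forall k, (N <= k)%nat -> c k = C0.

Definition truncate (N : nat) (c : nat -> C) : nat -> C := fun k => if Nat.ltb k N then c k else C0.

Lemma truncate_supported N c : supported N (truncate N c).
Proof. intros k Hk. unfold truncate. destruct (Nat.ltb_spec k N); [lia | reflexivity]. Qed.

Lemma lincomb_truncate B c : lincomb B (truncate (length B) c) = lincomb B c.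
Proof.
  apply lincomb_ext. intros k Hk. unfold truncate.
  destruct (Nat.ltb_spec k (length B)); [reflexivity | lia].
Qed.

Section Quotient.
Variables (d : nat) (G : ncpoly -> Prop) (n : nat).

(* [q] is zero in the finite-dimensional algebra C<x>/(J + span of the words
   that are not small), i.e. it agrees with an element of [J] on small words. *)
Definition negligible (q : ncpoly) : Prop :=
  exists j, in_ideal d G j /\ forall w, small_word d n w -> coef q w = coef j w.

Lemma negligible_psum_ext q p : negligible q -> (forall X, psum X p = psum X q) -> negligible p.
Proof.
  intros [j [Hj E]] H. exists j. split; auto. intros w Hw. rewrite coef_psum, H, <- coef_psum. auto.
Qed.

Lemma negligible_of_ideal j : in_ideal d G j -> negligible j.
Proof. intro H. exists j. auto. Qed.

Lemma negligible_nil : negligible [].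
Proof. apply negligible_of_ideal, in_ideal_nil. Qed.

Lemma negligible_app p q : negligible p -> negligible q -> negligible (p ++ q).
Proof.
  intros [j1 [H1 E1]] [j2 [H2 E2]]. exists (j1 ++ j2). split; [apply in_ideal_app; auto|].
  intros w Hw. rewrite !coef_app, E1, E2; auto.
Qed.

Lemma negligible_scal c p : negligible p -> negligible (scal_poly c p).
Proof.
  intros [j [H E]]. exists (scal_poly c j). split; [apply in_ideal_scal; auto|].
  intros w Hw. rewrite !coef_scal, E; auto.
Qed.

Lemma negligible_flat_map {A} (F : A -> ncpoly) L :
  Forall (fun x => negligible (F x)) L -> negligible (flat_map F L).
Proof. induction 1; simpl; [apply negligible_nil | apply negligible_app; auto]. Qed.

Lemma negligible_large_word w a : ~ small_word d n w -> negligible [(w, a)].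
Proof.
  intro H. exists []. split; [apply in_ideal_nil|]. intros v Hv. simpl.
  destruct (list_eq_dec Nat.eq_dec w v); [subst; contradiction | ring].
Qed.

Lemma negligible_lmul_letter i q : (i < d)%nat -> negligible q -> negligible (mono_mul [i] q []).
Proof.
  intros Hi [j [Hj E]]. exists (mono_mul [i] j []). split; [apply in_ideal_mono; auto|].
  intros w Hw. destruct (classic (exists u, w = [i] ++ u ++ [])) as [[u ->]|Hn].
  - rewrite !coef_mono_mul. apply E. destruct Hw as [Hl Hf].
    simpl in Hl, Hf. rewrite app_nil_r in *. inversion Hf; subst. split; auto; lia.
  - rewrite !coef_mono_mul_out; auto; intros u Hu; apply Hn; eauto.
Qed.

Lemma negligible_lmul a q : is_word d a -> negligible q -> negligible (mono_mul a q []).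
Proof.
  intros Ha Hq. induction Ha as [|i a Hi Ha IH].
  - apply (negligible_psum_ext q); auto. intro X. rewrite psum_mono.
    apply psum_ext. intro w. simpl. rewrite app_nil_r. reflexivity.
  - apply (negligible_psum_ext (mono_mul [i] (mono_mul a q []) [])).
    + apply negligible_lmul_letter; auto.
    + intro X. rewrite !psum_mono. apply psum_ext. intro w. simpl. rewrite !app_nil_r. reflexivity.
Qed.

Lemma negligible_pmul_l g h : is_poly d g -> negligible h -> negligible (pmul g h).
Proof.
  intros Hg Hh. apply negligible_flat_map. eapply Forall_impl; [|exact Hg].
  intros t Ht. apply negligible_scal, negligible_lmul; auto.
Qed.

Lemma negligible_pmul_r g h : in_ideal d G g -> is_poly d h -> negligible (pmul g h).
Proof.
  intros Hg Hh. apply (negligible_psum_ext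
    (flat_map (fun s => scal_poly (snd s) (mono_mul [] g (fst s))) h)).
  - apply negligible_of_ideal, in_ideal_flat_map. eapply Forall_impl; [|exact Hh].
    intros s Hs. apply in_ideal_scal, in_ideal_mono; auto.
  - intro X. apply psum_pmul_swap.
Qed.

Definition independent (B : list word) : Prop :=
  forall c, negligible (lincomb B c) -> forall k, (k < length B)%nat -> c k = C0.

Definition spans (B : list word) (q : ncpoly) : Prop :=
  exists c, negligible (psub q (lincomb B c)).

(* Greedy: [w] is dropped exactly when a negligible combination of [w :: B]
   has a nonzero coefficient on [w], i.e. when [w] is spanned by [B]. *)
Lemma exists_independent_spanning W :
  exists B, independent B /\ (forall w, In w W -> spans B [(w, C1)]) /\ incl B W.
Proof.
  induction W as [|w W IH].
  - exists []. split; [|split]; [intros c _ k Hk; simpl in Hk; lia | intros w [] | intros x []].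
  - destruct IH as (B & HI & HS & Hincl).
    destruct (classic (exists c, negligible (lincomb (w :: B) c) /\ c 0%nat <> C0))
      as [(c & Hc & Hc0)|Hfree].
    + exists B. split; [|split]; [exact HI | | intros x Hx; right; auto].
      intros v [<-|Hv]; [|auto].
      exists (fun k => Cmul (Copp (Cinv (c 0%nat))) (c (S k))).
      apply (negligible_psum_ext _ _ (negligible_scal (Cinv (c 0%nat)) _ Hc)).
      intro X. rewrite psum_psub, psum_scal, psum_lincomb_scal. simpl. field. auto.
    + exists (w :: B). split; [|split].
      * intros c Hc [|k] Hk.
        -- apply NNPP. intro Hn. apply Hfree. eauto.
        -- assert (Hc0 : c 0%nat = C0) by (apply NNPP; intro Hn; apply Hfree; eauto).
           apply (HI (fun k => c (S k))); [|simpl in Hk; lia].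
           apply (negligible_psum_ext _ _ Hc). intro X. simpl. rewrite Hc0. ring.
      * intros v [<-|Hv].
        -- exists (fun k => match k with 0%nat => C1 | S _ => C0 end).
           apply (negligible_psum_ext _ _ negligible_nil). intro X.
           rewrite psum_psub. simpl. rewrite psum_lincomb0. ring.
        -- destruct (HS v Hv) as [c Hc].
           exists (fun k => match k with 0%nat => C0 | S k => c k end).
           apply (negligible_psum_ext _ _ Hc). intro X. rewrite !psum_psub. simpl.
           change (fun k => c k) with c. ring.
      * intros x [<-|Hx]; [left | right]; auto.
Qed.

Definition basis : list word :=
  proj1_sig (constructive_indefinite_description _ (exists_independent_spanning (small_words d n))).

Lemma basis_spec : independent basis /\
  (forall w, In w (small_words d n) -> spans basis [(w, C1)]) /\ incl basis (small_words d n).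
Proof. unfold basis. destruct (constructive_indefinite_description _ _). auto. Qed.

Lemma coord_exists q :
  exists c, supported (length basis) c /\ negligible (psub q (lincomb basis c)).
Proof.
  destruct basis_spec as (_ & HS & _).
  induction q as [|[w a] q IH].
  - exists (fun _ => C0). split; [intros k _; reflexivity|].
    apply (negligible_psum_ext _ _ negligible_nil). intro X.
    rewrite psum_psub, psum_lincomb0. simpl. ring.
  - destruct IH as (c1 & Hs1 & K1). destruct (classic (small_word d n w)) as [Hw|Hw].
    + apply small_words_spec in Hw. destruct (HS w Hw) as [c2 K2].
      exists (truncate (length basis) (fun k => Cadd (Cmul a (c2 k)) (c1 k))).
      split; [apply truncate_supported|]. rewrite lincomb_truncate.
      apply (negligible_psum_ext _ _ (negligible_app _ _ (negligible_scal a _ K2) K1)).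
      intro X. rewrite psum_app, psum_scal, !psum_psub, psum_lincomb_add, psum_lincomb_scal.
      simpl. ring.
    + exists c1. split; auto.
      apply (negligible_psum_ext _ _ (negligible_app _ _ (negligible_large_word w a Hw) K1)).
      intro X. rewrite psum_app, !psum_psub. simpl. ring.
Qed.

Lemma coord_unique q c1 c2 :
  supported (length basis) c1 -> supported (length basis) c2 ->
  negligible (psub q (lincomb basis c1)) -> negligible (psub q (lincomb basis c2)) -> c1 = c2.
Proof.
  destruct basis_spec as [HI _]. intros S1 S2 K1 K2.
  assert (HK : negligible (lincomb basis (fun k => Cadd (c1 k) (Cmul (Copp C1) (c2 k))))).
  { apply (negligible_psum_ext _ _ (negligible_app _ _ K2 (negligible_scal (Copp C1) _ K1))).
    intro X. rewrite psum_app, psum_scal, psum_lincomb_add, psum_lincomb_scal, !psum_psub. ring. }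
  apply functional_extensionality. intro k. destruct (Nat.lt_ge_cases k (length basis)) as [Hk|Hk].
  - transitivity (Cadd (Cadd (c1 k) (Cmul (Copp C1) (c2 k))) (c2 k)); [ring|].
    rewrite (HI _ HK k Hk). ring.
  - rewrite S1, S2; auto.
Qed.

Definition coord (q : ncpoly) : nat -> C :=
  proj1_sig (constructive_indefinite_description _ (coord_exists q)).

Lemma coord_spec q :
  supported (length basis) (coord q) /\ negligible (psub q (lincomb basis (coord q))).
Proof. unfold coord. destruct (constructive_indefinite_description _ _). auto. Qed.

Lemma coord_eq q c :
  supported (length basis) c -> negligible (psub q (lincomb basis c)) -> coord q = c.
Proof. intros. destruct (coord_spec q). eapply coord_unique; eauto. Qed.

Lemma coord_congr q1 q2 : negligible (psub q1 q2) -> coord q1 = coord q2.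
Proof.
  intro H. destruct (coord_spec q2) as [S2 K2]. apply coord_eq; auto.
  apply (negligible_psum_ext _ _ (negligible_app _ _ H K2)). intro X.
  rewrite psum_app, !psum_psub. ring.
Qed.

Lemma coord_psum_ext q1 q2 : (forall X, psum X q1 = psum X q2) -> coord q1 = coord q2.
Proof.
  intro H. apply coord_congr, (negligible_psum_ext _ _ negligible_nil). intro X.
  rewrite psum_psub, H. simpl. ring.
Qed.

Lemma coord_app q1 q2 : coord (q1 ++ q2) = fun k => Cadd (coord q1 k) (coord q2 k).
Proof.
  destruct (coord_spec q1) as [S1 K1], (coord_spec q2) as [S2 K2]. apply coord_eq.
  - intros k Hk. rewrite S1, S2 by auto. ring.
  - apply (negligible_psum_ext _ _ (negligible_app _ _ K1 K2)). intro X.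
    rewrite psum_app, !psum_psub, psum_app, psum_lincomb_add. ring.
Qed.

Lemma coord_scal a q : coord (scal_poly a q) = fun k => Cmul a (coord q k).
Proof.
  destruct (coord_spec q) as [S1 K1]. apply coord_eq.
  - intros k Hk. rewrite S1 by auto. ring.
  - apply (negligible_psum_ext _ _ (negligible_scal a _ K1)). intro X.
    rewrite psum_scal, !psum_psub, psum_scal, psum_lincomb_scal. ring.
Qed.

Lemma coord_negligible q : negligible q -> coord q = fun _ => C0.
Proof.
  intro H. apply coord_eq; [intros k _; reflexivity|].
  apply (negligible_psum_ext _ _ H). intro X. rewrite psum_psub, psum_lincomb0. ring.
Qed.

Lemma negligible_of_coord0 q : coord q = (fun _ => C0) -> negligible q.
Proof.
  intro E. destruct (coord_spec q) as [_ K]. rewrite E in K.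
  apply (negligible_psum_ext _ _ K). intro X. rewrite psum_psub, psum_lincomb0. ring.
Qed.

Lemma coord_lincomb c : supported (length basis) c -> coord (lincomb basis c) = c.
Proof.
  intro S. apply coord_eq; auto. apply (negligible_psum_ext _ _ negligible_nil). intro X.
  rewrite psum_psub. simpl. ring.
Qed.

End Quotient.

Fixpoint Rsum (N : nat) (h : nat -> R) : R :=
  match N with 0 => 0%R | S N => (Rsum N h + h N)%R end.

Fixpoint Csum (N : nat) (h : nat -> C) : C :=
  match N with 0 => C0 | S N => Cadd (Csum N h) (h N) end.

Lemma Csum_shift N h : Csum (S N) h = Cadd (h 0%nat) (Csum N (fun k => h (S k))).
Proof. induction N; simpl in *; [ring|]. rewrite IHN. ring. Qed.

Lemma Csum0 N : Csum N (fun _ => C0) = C0.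
Proof. induction N; simpl; [reflexivity|]. rewrite IHN. ring. Qed.

Lemma Rsum_nonneg N h : (forall k, 0 <= h k)%R -> (0 <= Rsum N h)%R.
Proof. intro H. induction N; simpl; [lra|]. specialize (H N). lra. Qed.

Lemma Rsum_le N g h : (forall k, (k < N)%nat -> g k <= h k)%R -> (Rsum N g <= Rsum N h)%R.
Proof.
  induction N; intro H; simpl; [lra|].
  assert (Rsum N g <= Rsum N h)%R by (apply IHN; intros; apply H; lia).
  specialize (H N ltac:(lia)). lra.
Qed.

Lemma Rsum_scal N c h : Rsum N (fun k => c * h k)%R = (c * Rsum N h)%R.
Proof. induction N; simpl; [ring|]. rewrite IHN. ring. Qed.

Lemma Rsum_mono N k h : (forall j, 0 <= h j)%R -> (Rsum N h <= Rsum (N + k) h)%R.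
Proof.
  intro H. induction k; [rewrite Nat.add_0_r; lra|].
  rewrite Nat.add_succ_r. simpl. specialize (H (N + k)%nat). lra.
Qed.

Lemma Rsum_mul_le N x y : (forall k, 0 <= x k)%R -> (forall k, 0 <= y k)%R ->
  (Rsum N (fun k => x k * y k) <= Rsum N x * Rsum N y)%R.
Proof.
  intros Hx Hy. induction N; simpl; [lra|].
  pose proof (Rsum_nonneg N x Hx). pose proof (Rsum_nonneg N y Hy).
  specialize (Hx N). specialize (Hy N). nra.
Qed.

Lemma sum_f_R0_Rsum s N : sum_f_R0 s N = Rsum (S N) s.
Proof. induction N; simpl; [lra|]. rewrite IHN. reflexivity. Qed.

Lemma Cnorm2_nonneg z : (0 <= Cnorm2 z)%R.
Proof. unfold Cnorm2. nra. Qed.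

Lemma Cnorm2_mul a b : Cnorm2 (Cmul a b) = (Cnorm2 a * Cnorm2 b)%R.
Proof. destruct a, b; unfold Cnorm2, Cmul; simpl; ring. Qed.

Lemma Cnorm2_add_le a b : (Cnorm2 (Cadd a b) <= 2 * Cnorm2 a + 2 * Cnorm2 b)%R.
Proof.
  destruct a as [x y], b as [u v]; unfold Cnorm2, Cadd; simpl.
  pose proof (Rle_0_sqr (x - u)). pose proof (Rle_0_sqr (y - v)). unfold Rsqr in *. lra.
Qed.

Lemma Cnorm2_C0 : Cnorm2 C0 = 0%R.
Proof. unfold Cnorm2, C0; simpl; ring. Qed.

(* a crude bound; any constant depending only on [N] suffices *)
Lemma Cnorm2_Csum_le N h : (Cnorm2 (Csum N h) <= 2 ^ N * Rsum N (fun k => Cnorm2 (h k)))%R.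
Proof.
  induction N; simpl; [rewrite Cnorm2_C0; lra|].
  pose proof (Cnorm2_add_le (Csum N h) (h N)). pose proof (Cnorm2_nonneg (h N)).
  pose proof (Rsum_nonneg N (fun k => Cnorm2 (h k)) (fun k => Cnorm2_nonneg _)).
  assert (1 <= 2 ^ N)%R by (apply pow_R1_Rle; lra). nra.
Qed.

Lemma sqsum_partial_le f l N : sqsum f l -> (Rsum N (fun k => Cnorm2 (f k)) <= l)%R.
Proof.
  intro H. destruct (Rle_or_lt (Rsum N (fun k => Cnorm2 (f k))) l) as [|Hlt]; [auto|exfalso].
  destruct (H (Rsum N (fun k => Cnorm2 (f k)) - l)%R ltac:(lra)) as [N0 HN0].
  specialize (HN0 (N0 + N)%nat ltac:(lia)). rewrite sum_f_R0_Rsum in HN0. unfold Rdist in HN0.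
  pose proof (Rsum_mono N (S (N0 + N) - N) (fun k => Cnorm2 (f k)) (fun j => Cnorm2_nonneg _))
    as Hm.
  replace (N + (S (N0 + N) - N))%nat with (S (N0 + N)) in Hm by lia.
  pose proof (Rle_abs (Rsum (S (N0 + N)) (fun k => Cnorm2 (f k)) - l)). lra.
Qed.

Lemma sqsum_supported g N : supported N g -> sqsum g (Rsum N (fun k => Cnorm2 (g k))).
Proof.
  intros HS eps Heps. exists N. intros m Hm. rewrite sum_f_R0_Rsum.
  replace (Rsum (S m) (fun k => Cnorm2 (g k))) with (Rsum N (fun k => Cnorm2 (g k))).
  - unfold Rdist. rewrite Rminus_diag, Rabs_R0. lra.
  - replace (S m) with (N + (S m - N))%nat by lia. generalize (S m - N)%nat. intro k.
    induction k as [|k IH]; [rewrite Nat.add_0_r; reflexivity|].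
    rewrite Nat.add_succ_r. simpl. rewrite <- IH, HS, Cnorm2_C0 by lia. ring.
Qed.

Lemma in_l2_supported g N : supported N g -> in_l2 g.
Proof. intro HS. eexists. apply sqsum_supported; eauto. Qed.

Lemma Un_cv_const c : Un_cv (fun _ => c) c.
Proof. intros eps He. exists 0%nat. intros. unfold Rdist. rewrite Rminus_diag, Rabs_R0. lra. Qed.

Lemma in_l2_add f g : in_l2 f -> in_l2 g -> in_l2 (vadd f g).
Proof.
  intros [lf Hf] [lg Hg].
  assert (Hc : Un_cv (fun N => sum_f_R0 (fun k => 2 * Cnorm2 (f k) + 2 * Cnorm2 (g k)) N)%R
                     (2 * lf + 2 * lg)%R).
  { replace (fun N => sum_f_R0 (fun k => 2 * Cnorm2 (f k) + 2 * Cnorm2 (g k)) N)%R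
      with (fun N => 2 * sum_f_R0 (fun k => Cnorm2 (f k)) N
                     + 2 * sum_f_R0 (fun k => Cnorm2 (g k)) N)%R.
    - apply CV_plus; apply CV_mult; auto; apply Un_cv_const.
    - apply functional_extensionality. intro N. rewrite sum_plus, !scal_sum.
      f_equal; apply sum_eq; intros; ring. }
  destruct (Rseries_CV_comp (fun k => Cnorm2 (vadd f g k))
              (fun k => 2 * Cnorm2 (f k) + 2 * Cnorm2 (g k))%R) as [l Hl].
  - intro k. split; [apply Cnorm2_nonneg | apply Cnorm2_add_le].
  - eauto.
  - exists l. exact Hl.
Qed.

Lemma in_l2_scal c f : in_l2 f -> in_l2 (vscal c f).
Proof.
  intros [lf Hf]. exists (Cnorm2 c * lf)%R. unfold sqsum, infinite_sum.
  replace (sum_f_R0 (fun k => Cnorm2 (vscal c f k)))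
    with (fun N => Cnorm2 c * sum_f_R0 (fun k => Cnorm2 (f k)) N)%R.
  - apply CV_mult; [apply Un_cv_const | exact Hf].
  - apply functional_extensionality. intro N. rewrite scal_sum. apply sum_eq. intros.
    unfold vscal. rewrite Cnorm2_mul. ring.
Qed.

Lemma finite_matrix_bounded N (A : nat -> vec) (T : op) :
  (forall k, supported N (A k)) ->
  (forall f m, T f m = Csum N (fun k => Cmul (f k) (A k m))) ->
  exists M, forall f l, sqsum f l -> exists l', sqsum (T f) l' /\ (l' <= M * l)%R.
Proof.
  intros HA HT. set (a m := Rsum N (fun k => Cnorm2 (A k m))).
  exists (2 ^ N * Rsum N a)%R. intros f l Hf.
  exists (Rsum N (fun m => Cnorm2 (T f m))). split.
  - apply sqsum_supported. intros m Hm. rewrite HT, <- (Csum0 N). f_equal.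
    apply functional_extensionality. intro k. rewrite HA by exact Hm. ring.
  - set (nf := Rsum N (fun k => Cnorm2 (f k))).
    assert (Hl : (nf <= l)%R) by (apply sqsum_partial_le; auto).
    assert (Hnf : (0 <= nf)%R) by (apply Rsum_nonneg; intro; apply Cnorm2_nonneg).
    assert (H2 : (1 <= 2 ^ N)%R) by (apply pow_R1_Rle; lra).
    assert (Ha : forall m, (0 <= a m)%R) by (intro; apply Rsum_nonneg; intro; apply Cnorm2_nonneg).
    apply Rle_trans with (Rsum N (fun m => 2 ^ N * a m * nf))%R.
    + apply Rsum_le. intros m _. rewrite HT.
      eapply Rle_trans; [apply Cnorm2_Csum_le|]. rewrite Rmult_assoc.
      apply Rmult_le_compat_l; [lra|]. rewrite Rmult_comm.
      eapply Rle_trans; [|apply Rsum_mul_le; intro; apply Cnorm2_nonneg].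
      apply Rsum_le. intros k _. rewrite Cnorm2_mul. lra.
    + replace (fun m => 2 ^ N * a m * nf)%R with (fun m => (2 ^ N * nf) * a m)%R
        by (apply functional_extensionality; intro; ring).
      rewrite Rsum_scal. assert (0 <= Rsum N a)%R by (apply Rsum_nonneg; auto).
      replace (2 ^ N * nf * Rsum N a)%R with (2 ^ N * Rsum N a * nf)%R by ring.
      apply Rmult_le_compat_l; [nra | lra].
Qed.


Lemma psum_pmul_psub X g h1 h2 :
  psum X (pmul g (psub h1 h2)) = Csub (psum X (pmul g h1)) (psum X (pmul g h2)).
Proof.
  rewrite !psum_pmul.
  rewrite (psum_ext _ (fun w => Cadd (psum (fun v => X (w ++ v)) h1)
                                     (Cmul (Copp C1) (psum (fun v => X (w ++ v)) h2)))).
  - rewrite psum_fun_add, psum_fun_scal. unfold Csub. ring.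
  - intro w. rewrite psum_psub. unfold Csub. ring.
Qed.

Section LeftMultiplication.
Variables (d : nat) (G : ncpoly -> Prop) (n : nat).

Local Notation basis := (basis d G n).
Local Notation coord := (coord d G n).

(* Left multiplication by [x_i] on the quotient algebra, in the coordinates of
   [basis]; only the first [length basis] entries of [f] are read. *)
Definition lmul_op (i : nat) : op := fun f => coord (mono_mul [i] (lincomb basis f) []).

Lemma is_poly_lincomb_basis f : is_poly d (lincomb basis f).
Proof.
  eapply Forall_impl; [|apply lincomb_words]. intros s Hs. simpl in Hs.
  destruct (basis_spec d G n) as (_ & _ & Hincl). apply Hincl, small_words_spec in Hs. apply Hs.
Qed.

Lemma coord_pmul_congr g h1 h2 :
  is_poly d g -> negligible d G n (psub h1 h2) -> coord (pmul g h1) = coord (pmul g h2).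
Proof.
  intros Hg Hh. apply coord_congr.
  apply (negligible_psum_ext _ _ _ _ _ (negligible_pmul_l _ _ _ _ _ Hg Hh)). intro X.
  rewrite psum_pmul_psub, psum_psub. reflexivity.
Qed.

Lemma psum_coord_pmul g h m :
  psum (fun w => coord (mono_mul w h []) m) g = coord (pmul g h) m.
Proof.
  unfold pmul. induction g as [|[w c] g IH]; simpl.
  - rewrite coord_negligible by apply negligible_nil. reflexivity.
  - rewrite coord_app, coord_scal, <- IH. reflexivity.
Qed.

Lemma word_act_lmul_op w f :
  w <> [] -> is_word d w -> word_act lmul_op w f = coord (mono_mul w (lincomb basis f) []).
Proof.
  induction w as [|i w IH]; intros Hne Hw; [congruence|]. inversion Hw as [|? ? Hi Hw']; subst.
  destruct w as [|j w]; [reflexivity|].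
  change (lmul_op i (word_act lmul_op (j :: w) f) =
          coord (mono_mul (i :: j :: w) (lincomb basis f) [])).
  rewrite IH by (congruence || auto).
  set (Q := mono_mul (j :: w) (lincomb basis f) []). unfold lmul_op. apply coord_congr.
  destruct (coord_spec d G n Q) as [_ KQ].
  apply (negligible_psum_ext _ _ _ _ _
           (negligible_lmul_letter _ _ _ i _ Hi (negligible_scal _ _ _ (Copp C1) _ KQ))).
  intro X. unfold Q. rewrite !psum_psub, !psum_mono, psum_scal, psum_psub, !psum_mono.
  rewrite (psum_ext (fun u => X ((i :: j :: w) ++ u ++ []))
                    (fun u => X ([i] ++ ((j :: w) ++ u ++ []) ++ [])));
    [ring|]. intro u. simpl. rewrite !app_nil_r. reflexivity.
Qed.

(* The constant term must vanish: the empty word acts as the identity on all of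
   [vec], not through the quotient. *)
Lemma peval_lmul_op_ideal g f m :
  in_ideal d G g -> coef g [] = C0 -> peval lmul_op g f m = C0.
Proof.
  intros Hg H0. rewrite peval_psum.
  rewrite (psum_update _ (fun w => coord (mono_mul w (lincomb basis f) []) m) g []).
  - rewrite H0, psum_coord_pmul, coord_negligible.
    + ring.
    + apply negligible_pmul_r; auto. apply is_poly_lincomb_basis.
  - destruct Hg as [Hp _]. eapply Forall_impl; [|exact Hp]. intros t Ht Hne.
    rewrite word_act_lmul_op; auto.
Qed.

Lemma peval_lmul_op_one p m :
  is_poly d p -> peval lmul_op p (coord [([], C1)]) m = coord p m.
Proof.
  intro Hp. destruct (coord_spec d G n [([], C1)]) as [Se Ke]. set (e := coord [([], C1)]) in *.
  rewrite peval_psum, (psum_ext_in _ (fun w => coord (mono_mul w (lincomb basis e) []) m)).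
  - rewrite psum_coord_pmul, (coord_pmul_congr p _ [([], C1)] Hp).
    + rewrite (coord_psum_ext _ _ _ _ p); [reflexivity | intro X; apply psum_pmul_one_r].
    + apply (negligible_psum_ext _ _ _ _ _ (negligible_scal _ _ _ (Copp C1) _ Ke)).
      intro X. rewrite psum_scal, !psum_psub. ring.
  - eapply Forall_impl; [|exact Hp]. intros [[|i w] c] Hw; cbn [fst] in *.
    + cbn [word_act]. rewrite (coord_psum_ext _ _ _ _ (lincomb basis e)), coord_lincomb; auto.
      intro X. rewrite psum_mono. apply psum_ext. intro u. simpl. rewrite app_nil_r. reflexivity.
    + rewrite word_act_lmul_op; auto. congruence.
Qed.

Lemma lmul_op_add i f g : lmul_op i (vadd f g) = vadd (lmul_op i f) (lmul_op i g).
Proof.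
  unfold lmul_op. rewrite (coord_psum_ext _ _ _ _
    (mono_mul [i] (lincomb basis f) [] ++ mono_mul [i] (lincomb basis g) [])), coord_app;
    [reflexivity|].
  intro X. rewrite psum_app, !psum_mono. apply psum_lincomb_add.
Qed.

Lemma lmul_op_scal i c f : lmul_op i (vscal c f) = vscal c (lmul_op i f).
Proof.
  unfold lmul_op. rewrite (coord_psum_ext _ _ _ _
    (scal_poly c (mono_mul [i] (lincomb basis f) []))), coord_scal; [reflexivity|].
  intro X. rewrite psum_scal, !psum_mono. apply psum_lincomb_scal.
Qed.

Lemma lmul_op_entries i f m :
  lmul_op i f m =
  Csum (length basis) (fun k => Cmul (f k) (coord (mono_mul [i] [(nth k basis [], C1)] []) m)).
Proof.
  unfold lmul_op. generalize basis as B. intro B. revert f.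
  induction B as [|w B IH]; intro f; simpl length.
  - simpl. rewrite coord_negligible by apply negligible_nil. reflexivity.
  - rewrite Csum_shift, (coord_psum_ext _ _ _ _ (scal_poly (f 0%nat) (mono_mul [i] [(w, C1)] [])
                   ++ mono_mul [i] (lincomb B (fun k => f (S k))) [])).
    + rewrite coord_app, coord_scal, IH. reflexivity.
    + intro X. rewrite psum_app, psum_scal, !psum_mono. simpl. ring.
Qed.

Lemma lmul_op_bounded i : bounded_op (lmul_op i).
Proof.
  split; [|split].
  - intros f g _ _ m. rewrite lmul_op_add. reflexivity.
  - intros c f _ m. rewrite lmul_op_scal. reflexivity.
  - apply (finite_matrix_bounded (length basis)
             (fun k => coord (mono_mul [i] [(nth k basis [], C1)] []))).
    + intro k. apply coord_spec.
    + apply lmul_op_entries.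
Qed.

End LeftMultiplication.

Definition pdeg (p : ncpoly) : nat :=
  fold_right (fun t acc => Nat.max (length (fst t)) acc) 0%nat p.

Lemma pdeg_spec p : Forall (fun t => (length (fst t) <= pdeg p)%nat) p.
Proof.
  induction p; simpl; constructor; [lia|].
  eapply Forall_impl; [|exact IHp]. simpl; intros; lia.
Qed.

Section Nullstellensatz.
Variables (d : nat) (G : ncpoly -> Prop).
Hypothesis homogeneous_generators : forall g, G g -> is_poly d g /\ is_homog g.

Lemma in_ideal_of_negligible p : is_poly d p -> negligible d G (pdeg p) p -> in_ideal d G p.
Proof.
  intros Hp (j & Hj & E). set (n := pdeg p) in *.
  apply (in_ideal_coef_ext d G (filter (short n) j)); [apply in_ideal_filter_short; auto | auto |].
  intro w. rewrite coef_filter_short. destruct (Nat.leb_spec (length w) n) as [Hl|Hl].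
  - destruct (classic (is_word d w)) as [Hw|Hw]; [apply E; split; auto|].
    rewrite (coef_out (fun w => is_word d w) p w), (coef_out (fun w => is_word d w) j w);
      auto; apply Hj.
  - apply (coef_out (fun w => (length w <= n)%nat)); [apply pdeg_spec | lia].
Qed.

Lemma lmul_op_in_zero_set n :
  ~ in_ideal d G [([], C1)] -> inZ d (in_ideal d G) (lmul_op d G n).
Proof.
  intro Hone. split; [intros i _; apply lmul_op_bounded|].
  intros g Hg f _ m. apply peval_lmul_op_ideal; auto.
  apply NNPP. intro Hc. exact (Hone (in_ideal_one_of_const d G homogeneous_generators g Hg Hc)).
Qed.

Theorem vanishing_ideal_zero_set p :
  is_poly d p -> (inI d (inZ d (in_ideal d G)) p <-> in_ideal d G p).
Proof.
  intro Hp. split; [|intro HJ; split; auto; intros T [_ HT]; apply HT; auto].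
  intros [_ HI]. apply NNPP. intro Hn.
  assert (Hone : ~ in_ideal d G [([], C1)]) by (intro H1; exact (Hn (in_ideal_of_one d G p H1 Hp))).
  set (e := coord d G (pdeg p) [([], C1)]).
  assert (He : in_l2 e) by exact (in_l2_supported _ _ (proj1 (coord_spec d G _ _))).
  apply Hn, in_ideal_of_negligible, negligible_of_coord0; auto.
  apply functional_extensionality. intro m.
  rewrite <- (peval_lmul_op_one d G _ p m Hp). exact (HI _ (lmul_op_in_zero_set _ Hone) e He m).
Qed.

End Nullstellensatz.

Definition zero_tuple (d : nat) (T : nat -> op) : Prop :=
  forall i, (i < d)%nat -> forall f, in_l2 f -> forall n, T i f n = C0.

Lemma in_l2_vzero : in_l2 vzero.
Proof. apply (in_l2_supported _ 0). intros k _. reflexivity. Qed.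

Lemma word_act_zero_tuple d T w f m :
  zero_tuple d T -> in_l2 f -> is_word d w -> w <> [] -> word_act T w f m = C0.
Proof.
  intros HZ Hf Hw. revert m. induction Hw as [|i w Hi Hw IH]; intros m Hne; [congruence|]. simpl.
  destruct w as [|j w]; [apply HZ; auto|].
  replace (word_act T (j :: w) f) with vzero
    by (apply functional_extensionality; intro; symmetry; apply IH; congruence).
  apply HZ; auto. apply in_l2_vzero.
Qed.

Lemma peval_zero_tuple d T p f m :
  zero_tuple d T -> is_poly d p -> in_l2 f -> peval T p f m = Cmul (coef p []) (f m).
Proof.
  intros HZ Hp Hf. rewrite peval_psum, (psum_ext_in _ (fun w => Cmul (f m) (delta [] w))).
  - rewrite psum_fun_scal, <- coef_psum. ring.
  - eapply Forall_impl; [|exact Hp]. intros [w c] Hw. simpl in *. unfold delta.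
    destruct (list_eq_dec Nat.eq_dec w []) as [->|Hne]; [simpl; ring|].
    rewrite (word_act_zero_tuple d); auto. ring.
Qed.

Lemma zero_tuple_bounded d T i : zero_tuple d T -> (i < d)%nat -> bounded_op (T i).
Proof.
  intros HZ Hi. split; [|split].
  - intros f g Hf Hg m. unfold vadd.
    rewrite !HZ; auto; [apply C_ext; simpl; ring | apply in_l2_add; auto].
  - intros c f Hf m. unfold vscal. rewrite !HZ; auto; [ring | apply in_l2_scal; auto].
  - exists 0%R. intros f l Hf. exists 0%R. split; [|lra].
    replace (T i f) with vzero
      by (apply functional_extensionality; intro; symmetry; apply HZ; auto; exists l; auto).
    exact (sqsum_supported vzero 0 (fun _ _ => eq_refl)).
Qed.

Definition e0 : vec := fun k => match k with 0%nat => C1 | _ => C0 end.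

Lemma vanishes_on_zero_tuples d p :
  is_poly d p -> ((forall T, zero_tuple d T -> pvanish T p) <-> coef p [] = C0).
Proof.
  intro Hp. split.
  - intro H. assert (Hz : zero_tuple d (fun _ _ _ => C0)) by (intros ? ? ? ? ?; reflexivity).
    assert (He0 : in_l2 e0) by (apply (in_l2_supported _ 1); intros [|k] Hk; [lia | reflexivity]).
    pose proof (H _ Hz e0 He0 0%nat) as E. rewrite (peval_zero_tuple d) in E; auto.
    rewrite <- E. unfold e0. ring.
  - intros H0 T HZ f Hf m. rewrite (peval_zero_tuple d), H0; auto. ring.
Qed.

Definition split_first_letter (t : term) : list (word * C * ncpoly * word) :=
  match fst t with [] => [] | i :: w => [([], snd t, [([i], C1)], w)] end.

Lemma in_ideal_variables d p : in_ideal d (variables d) p <-> is_poly d p /\ coef p [] = C0.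
Proof.
  split.
  - intros (Hp & L & HL & E). split; auto. rewrite E. clear E.
    induction HL as [|[[[a c] g] b] L ([i [_ ->]] & _) _ IH]; simpl; [reflexivity|].
    rewrite IH.
    destruct (list_eq_dec Nat.eq_dec (a ++ i :: b) []); [destruct a; discriminate | ring].
  - intros [Hp H0]. split; auto. exists (flat_map split_first_letter p). split.
    + apply Forall_forall. intros x Hx.
      apply in_flat_map in Hx as ([[|i w] c] & Ht & Hx); [destruct Hx|].
      eapply Forall_forall in Hp; [|exact Ht]. inversion Hp; subst.
      destruct Hx as [<-|[]]. repeat split; auto. exists i; auto.
    + intro w. change (flat_map _ ?L) with (flat_map gen_term L). rewrite !coef_psum.
      set (Y := fun u : word => if list_eq_dec Nat.eq_dec u [] then C0 else delta w u).
      rewrite (psum_update (delta w) Y p []), H0.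
      * transitivity (psum Y p); [ring|]. clear Hp H0.
        induction p as [|[u c] p IH]; [reflexivity|].
        change (psum Y ((u, c) :: p)) with (Cadd (Cmul c (Y u)) (psum Y p)).
        rewrite IH. cbn [flat_map]. rewrite flat_map_app, psum_app. f_equal.
        destruct u as [|i u]; simpl; unfold Y; decide_words.
      * apply Forall_forall. intros t _ Hne. unfold Y. decide_words.
Qed.

Lemma zero_set_ext d J J' T : (forall p, J p <-> J' p) -> inZ d J T <-> inZ d J' T.
Proof. intro H. unfold inZ. split; intros [Hb Hv]; split; auto; intros p Hp; apply Hv, H; auto. Qed.

Lemma zero_set_variables d T : inZ d (in_ideal d (variables d)) T <-> zero_tuple d T.
Proof.
  split.
  - intros [_ HT] i Hi f Hf m.
    assert (Hx : in_ideal d (variables d) [([i], C1)]).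
    { apply in_ideal_variables. split; [repeat constructor; auto | simpl; decide_words]. }
    specialize (HT _ Hx f Hf m). simpl in HT. unfold vadd, vscal, vzero in HT. rewrite <- HT. ring.
  - intro HZ. split; [intros i Hi; apply (zero_tuple_bounded d); auto|].
    intros g Hg f Hf m. apply in_ideal_variables in Hg as [Hp H0].
    rewrite (peval_zero_tuple d), H0; auto. ring.
Qed.

Theorem mainTheorem14 (d : nat) (G : ncpoly -> Prop)
  (hG : forall g, G g -> is_poly d g /\ is_homog g) :
  (forall p, is_poly d p ->
     (inI d (inZ d (in_ideal d G)) p <-> in_ideal d G p)) /\
  ((forall T, inZ d (in_ideal d G) T <->
       (forall i, (i < d)%nat -> forall f, in_l2 f -> forall n, T i f n = C0)) <->
   (forall p, in_ideal d G p <-> in_ideal d (variables d) p)).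
Proof.
  split; [intros p Hp; apply vanishing_ideal_zero_set; auto|].
  split.
  - intros HZ p. rewrite in_ideal_variables. split.
    + intro Hp. pose proof (proj1 Hp) as Hpoly. split; auto.
      apply (vanishing_ideal_zero_set d G hG p Hpoly) in Hp as [_ HI].
      apply (vanishes_on_zero_tuples d p Hpoly). intros T HT. exact (HI T (proj2 (HZ T) HT)).
    + intros [Hp H0]. apply (vanishing_ideal_zero_set d G hG p Hp). split; auto.
      intros T HT. exact (proj2 (vanishes_on_zero_tuples d p Hp) H0 T (proj1 (HZ T) HT)).
  - intros HJ T. transitivity (inZ d (in_ideal d (variables d)) T).
    + apply zero_set_ext. exact HJ.
    + apply zero_set_variables.
Qed.
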